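(* Over undirected graphs, $\varphi_{\mathit{GadLin}}(x)$ is expressible by an ACR-GNN.
   Context: Undirected graphs are directed graphs $G=(V,E,\lambda)$ (finite $V$, loop-free $E$, $\lambda:V\to\{0,1\}^d$) with symmetric edge relation; $\{v,w\}$ denotes the pair of edges $(v,w),(w,v)$, and $N_G(v)$ is the neighbourhood of $v$. An ACR-GNN layer for undirected graphs is a triple $(\mathsf{agg},\mathsf{comb},\mathsf{read})$ where $\mathsf{agg}$ and $\mathsf{read}$ map multisets of vectors to vectors; it maps $\lambda$ to $\lambda'(v)=\mathsf{comb}\big(\lambda(v), \mathsf{agg}(\{\!\{\lambda(w)\}\!\}_{w\in N_G(v)}), \mathsf{read}(\{\!\{\lambda(w)\}\!\}_{w\in V})\big)$, where $\{\!\{\cdot\}\!\}$ denotes a multiset. An ACR-GNN classifier is a fixed number of layers followed by a classification function to truth values. The gadgetisation $\mathsf{gad}(G)$ of a directed graph $G=(V,E,\lambda)$ is the undirected graph of dimension 3 such that for each edge $(u,w)\in E$ it has nodes $v^1_u, v^2_{(u,w)}, v^3_{(u,w)}, v^1_w$, edges $\{v^1_u,v^2_{(u,w)}\}$, $\{v^2_{(u,w)},v^3_{(u,w)}\}$, $\{v^3_{(u,w)},v^1_w\}$, and labels $(1,0,0)$ for $v^1_u,v^1_w$, $(0,1,0)$ for $v^2_{(u,w)}$, $(0,0,1)$ for $v^3_{(u,w)}$. $\varphi_{\mathit{GadLin}}(x)$ is the node classifier accepting a node of a graph $G$ iff $G$ is isomorphic to $\mathsf{gad}(G')$ for some strict linear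 order $G'$. *)

From HB Require Import structures.
From mathcomp Require Import all_boot all_order all_algebra.
From Stdlib Require Import Rdefinitions.
From mathcomp Require Import Rstruct.
Set Implicit Arguments. Unset Strict Implicit. Unset Printing Implicit Defensive.

Record graph (d : nat) := Graph {
  vert : finType;
  edge : rel vert;
  lab  : vert -> d.-tuple bool }.

Definition loop_free d (G : graph d) : Prop := irreflexive (@edge d G).

Definition undirected d (G : graph d) : Prop :=
  irreflexive (@edge d G) /\ symmetric (@edge d G).

Definition strict_linear_order d (G : graph d) : Prop :=
  [/\ irreflexive (@edge d G),
      transitive (@edge d G) &
      forall u w : vert G, u != w -> edge u w || edge w u].

Definition isomorphic d (G H : graph d) : Prop :=
  exists f : vert G -> vert H,
    [/\ bijective f,
        forall u v, edge (f u) (f v) = edge u v &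
        forall u, lab (f u) = lab u].

(* raw nodes: inl u = v^1_u ; inr (inl e) = v^2_e ; inr (inr e) = v^3_e *)
Definition gad_raw (T : finType) : finType := (T + ((T * T) + (T * T)))%type.

Definition gad_valid (T : finType) (E : rel T) (x : gad_raw T) : bool :=
  match x with
  | inl u => [exists w, E u w || E w u]
  | inr (inl e) => E e.1 e.2
  | inr (inr e) => E e.1 e.2
  end.

Definition gad_adj_raw (T : finType) (x y : gad_raw T) : bool :=
  match x, y with
  | inl u, inr (inl e) => e.1 == u          (* {v^1_u, v^2_(u,w)} *)
  | inr (inl e), inl u => e.1 == u
  | inr (inl e), inr (inr e') => e == e'    (* {v^2_e, v^3_e} *)
  | inr (inr e'), inr (inl e) => e == e'
  | inr (inr e), inl w => e.2 == w          (* {v^3_(u,w), v^1_w} *)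
  | inl w, inr (inr e) => e.2 == w
  | _, _ => false
  end.

Definition gad_lab_raw (T : finType) (x : gad_raw T) : 3.-tuple bool :=
  match x with
  | inl _ => [tuple true; false; false]
  | inr (inl _) => [tuple false; true; false]
  | inr (inr _) => [tuple false; false; true]
  end.

Definition gad_vert d (G : graph d) : finType :=
  {x : gad_raw (vert G) | gad_valid (@edge d G) x}.

Definition gad d (G : graph d) : graph 3 :=
  @Graph 3 (gad_vert G)
    (fun x y => gad_adj_raw (val x) (val y))
    (fun x => gad_lab_raw (val x)).

Definition vec (n : nat) := 'rV[R]_n.

(* multisets over an eqType, represented by their multiplicity function *)
Definition mset (T : eqType) := T -> nat.

Definition msetof (V : finType) (T : eqType) (A : {pred V}) (f : V -> T) : mset T :=
  fun x => #|[pred w in A | f w == x]|.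

Record acr_layer (n m : nat) := ACRLayer {
  agg_dim : nat;
  read_dim : nat;
  agg  : mset (vec n) -> vec agg_dim;
  read : mset (vec n) -> vec read_dim;
  comb : vec n -> vec agg_dim -> vec read_dim -> vec m }.

Definition apply_layer n m (L : acr_layer n m) d (G : graph d)
    (lam : vert G -> vec n) : vert G -> vec m :=
  fun v => @comb n m L (lam v)
                  (@agg n m L (msetof [pred w | @edge d G v w] lam))
                  (@read n m L (msetof [pred w : vert G | true] lam)).

Inductive acr_gnn : nat -> nat -> Type :=
  | gnn_nil : forall n, acr_gnn n n
  | gnn_cons : forall n m k, acr_layer n m -> acr_gnn m k -> acr_gnn n k.

Fixpoint run_gnn n k (N : acr_gnn n k) d (G : graph d) {struct N}
  : (vert G -> vec n) -> vert G -> vec k :=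
  match N in acr_gnn n k return (vert G -> vec n) -> vert G -> vec k with
  | gnn_nil _ => fun lam => lam
  | gnn_cons _ _ _ L N' => fun lam => run_gnn N' (apply_layer L lam)
  end.

Record acr_classifier (d : nat) := ACRClassifier {
  out_dim : nat;
  net : acr_gnn d out_dim;
  cls : vec out_dim -> bool }.

Local Open Scope ring_scope.
Definition init_feat d (G : graph d) (v : vert G) : vec d :=
  \row_(i < d) (if tnth (lab v) i then 1 else 0).

Definition accepts d (C : acr_classifier d) (G : graph d) (v : vert G) : bool :=
  @cls d C (run_gnn (@net d C) (@init_feat d G) v).

Definition phi_GadLin (G : graph 3) (x : vert G) : Prop :=
  exists (d' : nat) (G' : graph d'), strict_linear_order G' /\ isomorphic G (gad G').

(* The classifier checks the shape of a gadget locally and counts globally.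
   A first layer verifies that each node has the neighbourhood of a node v^1, v^2 or v^3;
   every v^1 node u then receives the identifier "number of its v^2 neighbours", which is
   its out-degree in the encoded digraph, and two further message-passing rounds let the
   v^2 node of each edge (u, w) learn the pair (id u, id w).  The readout accepts iff the
   identifiers are pairwise distinct and the pairs present are exactly the pairs (i, j) of
   identifiers with j < i, each occurring once.  In the gadget of a strict linear order
   out-degrees are distinct and u -> w iff outdeg w < outdeg u, so it is accepted;
   conversely an accepted graph is the gadget of the order "u > w iff id w < id u" on its
   v^1 nodes.  Acceptance is invariant under isomorphism, as for every GNN. *)

From Pilot Require Import Defs.
From mathcomp Require Import all_boot all_order all_algebra.
From mathcomp Require Import boolp.
From Stdlib Require Import Rdefinitions.
From mathcomp Require Import Rstruct.
Set Implicit Arguments. Unset Strict Implicit. Unset Printing Implicit Defensive.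
Import GRing.Theory Num.Theory.

(** * Layers computing on encoded values *)

Record coding (T : Type) := Coding {
  cdim : nat;
  code : T -> vec cdim;
  uncode : vec cdim -> T;
  codeK : cancel code uncode }.
Arguments code {T} c _.
Arguments uncode {T} c _.

Section Codings.
Local Open Scope ring_scope.

Definition bool_row d (t : d.-tuple bool) : vec d :=
  \row_(i < d) (if tnth t i then 1 else 0).

Definition row_bools d (x : vec d) : d.-tuple bool := [tuple x ord0 i != 0 | i < d].

Lemma bool_rowK d : cancel (@bool_row d) (@row_bools d).
Proof.
move=> t; apply: eq_from_tnth => i; rewrite tnth_mktuple mxE.
by case: (tnth t i); rewrite ?oner_eq0 ?eqxx.
Qed.

Definition tuple_coding d : coding (d.-tuple bool) := Coding (@bool_rowK d).

Definition count_row (T : countType) (x : T) : vec 1 := const_mx (pickle x)%:R.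

Definition row_count (T : countType) (x0 : T) (v : vec 1) : T :=
  odflt x0 (unpickle (Num.truncn (v ord0 ord0))).

Lemma count_rowK (T : countType) (x0 : T) : cancel (@count_row T) (row_count x0).
Proof. by move=> x; rewrite /row_count mxE natrK pickleK. Qed.

Definition count_coding (T : countType) (x0 : T) : coding T := Coding (count_rowK x0).

End Codings.

Lemma msetof_comp_inj (V : finType) (T T' : eqType) (A : {pred V}) (F : V -> T)
    (g : T -> T') :
  injective g -> msetof A (g \o F) \o g = msetof A F.
Proof.
by move=> g_inj; apply: funext => x; apply: eq_card => w; rewrite !inE /= (inj_eq g_inj).
Qed.

Section CodedLayer.
Variables (S S' A B : eqType) (cS : coding S) (cS' : coding S') (cA : coding A) (cB : coding B).
Variables (agg : mset S -> A) (read : mset S -> B) (comb : S -> A -> B -> S').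

Definition coded_layer : acr_layer (cdim cS) (cdim cS') :=
  @ACRLayer _ _ (cdim cA) (cdim cB)
    (fun M => code cA (agg (M \o code cS)))
    (fun M => code cB (read (M \o code cS)))
    (fun x a r => code cS' (comb (uncode cS x) (uncode cA a) (uncode cB r))).

Definition step d (G : graph d) (F : vert G -> S) (v : vert G) : S' :=
  comb (F v) (agg (msetof [pred w | @edge d G v w] F))
       (read (msetof [pred w : vert G | true] F)).

Lemma run_coded_layer k (N : acr_gnn (cdim cS') k) d (G : graph d) (F : vert G -> S) :
  run_gnn (gnn_cons coded_layer N) (code cS \o F) = run_gnn N (code cS' \o step F).
Proof.
suff <- : apply_layer coded_layer (code cS \o F) = code cS' \o step F by [].
apply: funext => v; rewrite /apply_layer /= !msetof_comp_inj ?codeK //;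
  exact: can_inj (codeK _).
Qed.

End CodedLayer.

Arguments run_coded_layer {S S' A B} cS {cS' cA cB agg read comb k N d G F}.

(** * Isomorphism invariance *)

Lemma msetof_bij (V W : finType) (T : eqType) (f : V -> W) (A : {pred W}) (F : W -> T) :
  bijective f -> msetof [pred v | f v \in A] (F \o f) = msetof A F.
Proof.
case=> g fK gK; apply: funext => x; rewrite /msetof.
rewrite -(card_image (can_inj fK)); apply: eq_card => y; rewrite !inE.
apply/imageP/idP => [[v /andP [Av /eqP <-] ->]|/andP [Ay /eqP Fy]].
  by rewrite inE /= in Av; rewrite Av eqxx.
by exists (g y); rewrite ?inE /= gK // Ay Fy eqxx.
Qed.

Lemma run_gnn_iso d (G H : graph d) (f : vert G -> vert H) :
  bijective f -> (forall u v, edge (f u) (f v) = edge u v) ->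
  forall n k (N : acr_gnn n k) (lamG : vert G -> vec n) (lamH : vert H -> vec n),
  lamG = lamH \o f -> run_gnn N lamG = run_gnn N lamH \o f.
Proof.
move=> f_bij f_edge n k N; elim: N => [//|{}n m {}k L N IH] lamG lamH -> /=.
apply: IH; apply: funext => v; rewrite /apply_layer /=.
rewrite -(msetof_bij _ _ f_bij) -[in RHS](msetof_bij _ _ f_bij).
congr (comb _ (agg L _) (read L _)); apply: funext => y; apply: eq_card => w.
by rewrite !inE /= f_edge.
Qed.

Lemma accepts_iso d (C : acr_classifier d) (G H : graph d) (f : vert G -> vert H) :
  bijective f -> (forall u v, edge (f u) (f v) = edge u v) ->
  (forall u, lab (f u) = lab u) -> forall x, accepts C x = accepts C (f x).
Proof.
move=> f_bij f_edge f_lab x.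
rewrite /accepts (@run_gnn_iso _ _ _ _ f_bij f_edge _ _ _ _ (@init_feat d H)) //.
by apply: funext => v; rewrite /init_feat /= f_lab.
Qed.

(** * The classifier *)

(* Kind k in {1, 2, 3} is the label of the gadget nodes v^k; other labels have kind 0. *)
Definition kind_lab (k : nat) : 3.-tuple bool := [tuple k == 1; k == 2; k == 3].

Definition lab_kind (t : 3.-tuple bool) : nat :=
  if t == kind_lab 1 then 1 else if t == kind_lab 2 then 2
  else if t == kind_lab 3 then 3 else 0.

Lemma lab_kind_eq (t : 3.-tuple bool) k : 0 < k < 4 -> (lab_kind t == k) = (t == kind_lab k).
Proof.
case: t => s size_s; rewrite /lab_kind -!val_eqE /=.
by case: k => [|[|[|[|k]]]] // _; case: s size_s => [|[] [|[] [|[] []]]].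
Qed.

Lemma lab_kindK (t : 3.-tuple bool) : lab_kind t != 0 -> kind_lab (lab_kind t) = t.
Proof.
case: t => s size_s; rewrite /lab_kind -!val_eqE /=.
by case: s size_s => [|[] [|[] [|[] []]]] //= size_s _; apply: val_inj.
Qed.

Lemma lab_kind_lab k : 0 < k < 4 -> lab_kind (kind_lab k) = k.
Proof. by move=> k_range; apply/eqP; rewrite lab_kind_eq. Qed.

Definition kind_counts := (nat * nat * nat)%type.

Definition local_ok (k : nat) (c : kind_counts) : bool :=
  let: (c1, c2, c3) := c in
  match k with
  | 1 => (c1 == 0) && (0 < c2 + c3)
  | 2 => [&& c1 == 1, c2 == 0 & c3 == 1]
  | 3 => [&& c1 == 1, c2 == 1 & c3 == 0]
  | _ => false
  end.

(* A state (k, i, j): k is the kind, or 0 for a node failing the local check; a v^1 node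
   carries its identifier i; the v^2 node of an edge (u, w) carries (id u, id w). *)
Definition state := (nat * nat * nat)%type.

Definition count_kinds (M : mset (3.-tuple bool)) : kind_counts :=
  (M (kind_lab 1), M (kind_lab 2), M (kind_lab 3)).

Definition init_state (t : 3.-tuple bool) (c : kind_counts) (_ : unit) : state :=
  if local_ok (lab_kind t) c then (lab_kind t, c.1.2, 0) else (0, 0, 0).

Definition least_id (k : nat) (M : mset state) : nat :=
  if pselect (exists i, 0 < M (k, i, 0)) is left ex then ex_minn ex else 0.

Definition copy_src (s : state) (i : nat) (_ : unit) : state :=
  if s.1.1 == 1 then s else (s.1.1, i, s.2).

Definition copy_tgt (s : state) (j : nat) (_ : unit) : state :=
  if s.1.1 == 2 then (s.1.1, s.1.2, j) else s.

Definition readout_ok (M : mset state) : Prop :=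
  [/\ forall i j, M (0, i, j) = 0,
      forall i, M (1, i, 0) <= 1 &
      forall i j, M (2, i, j) = [&& j < i, 0 < M (1, i, 0) & 0 < M (1, j, 0)]].

Definition state_coding := count_coding ((0, 0, 0) : state).

Definition gadlin_net : acr_gnn 3 1 :=
  gnn_cons (coded_layer (tuple_coding 3) state_coding (count_coding (0, 0, 0)) (count_coding tt)
              count_kinds (fun _ => tt) init_state)
  (gnn_cons (coded_layer state_coding state_coding (count_coding 0) (count_coding tt)
              (least_id 1) (fun _ => tt) copy_src)
  (gnn_cons (coded_layer state_coding state_coding (count_coding 0) (count_coding tt)
              (least_id 3) (fun _ => tt) copy_tgt)
  (gnn_cons (coded_layer state_coding (count_coding false) (count_coding tt) (count_coding false)
              (fun _ => tt) (fun M => `[< readout_ok M >]) (fun _ _ b => b))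
  (gnn_nil 1)))).

Definition gadlin_classifier : acr_classifier 3 :=
  ACRClassifier gadlin_net (uncode (count_coding false)).

Section Semantics.
Variable G : graph 3.

Definition state1 : vert G -> state := step count_kinds (fun _ => tt) init_state (@lab 3 G).
Definition state2 : vert G -> state := step (least_id 1) (fun _ => tt) copy_src state1.
Definition state3 : vert G -> state := step (least_id 3) (fun _ => tt) copy_tgt state2.

Lemma accepts_gadlin (x : vert G) :
  accepts gadlin_classifier x = `[< readout_ok (msetof [pred w : vert G | true] state3) >].
Proof.
rewrite /accepts /gadlin_classifier; cbn [net cls]; rewrite /gadlin_net.
change (@init_feat 3 G) with (code (tuple_coding 3) \o @lab 3 G).
by rewrite (run_coded_layer (tuple_coding 3)) !(run_coded_layer state_coding) /= count_rowK.
Qed.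

End Semantics.

Arguments state1 {G}.
Arguments state2 {G}.
Arguments state3 {G}.

Lemma least_idE (V : finType) (A : {pred V}) (F : V -> state) k i :
  (exists2 w, w \in A & F w = (k, i, 0)) ->
  (forall w j, w \in A -> F w = (k, j, 0) -> j = i) ->
  least_id k (msetof A F) = i.
Proof.
move=> [w0 Aw0 Fw0] F_uniq; rewrite /least_id; case: pselect => [ex|[]]; last first.
  by exists i; apply/card_gt0P; exists w0; rewrite inE Aw0 Fw0 /=.
by case: ex_minnP => m /card_gt0P [w /andP [Aw /eqP /(F_uniq _ _ Aw)]].
Qed.

(** * Local structure of accepted graphs *)

Section NeighbourKinds.
Variable G : graph 3.
Local Notation V := (vert G).
Local Notation edge := (@edge 3 G).
Implicit Types u v w a : V.

Definition kind v := lab_kind (lab v).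
Definition kind_deg v k := #|[pred w | edge v w & kind w == k]|.
Definition kind_degs v : kind_counts := (kind_deg v 1, kind_deg v 2, kind_deg v 3).
Definition outdeg v := kind_deg v 2.
Definition local_gadget := forall v, local_ok (kind v) (kind_degs v).

Definition kind_nb v k := odflt v [pick w | edge v w & kind w == k].
Definition partner k := if k == 2 then 3 else 2.
Definition src v := kind_nb v 1.
Definition twin v := kind_nb v (partner (kind v)).
Definition tgt v := src (twin v).

Lemma kind_nbP v k : kind_deg v k = 1 -> forall w, (edge v w && (kind w == k)) = (w == kind_nb v k).
Proof.
case/mem_card1 => w0 nb_w0 w.
have -> : kind_nb v k = w0.
  rewrite /kind_nb; case: pickP => [w1 nb_w1 | none] /=.
    by apply/eqP; move: (nb_w0 w1); rewrite !inE nb_w1.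
  have := nb_w0 w0; rewrite !inE eqxx => nb0.
  by move: (none w0); rewrite /= nb0.
by move: (nb_w0 w); rewrite inE.
Qed.

Lemma state1E v :
  state1 v = if local_ok (kind v) (kind_degs v) then (kind v, outdeg v, 0) else (0, 0, 0).
Proof.
have kind_degE k : 0 < k < 4 -> msetof [pred w | edge v w] (@lab 3 G) (kind_lab k) = kind_deg v k.
  by move=> k_range; apply: eq_card => w; rewrite !inE /kind lab_kind_eq.
by rewrite /state1 /step /init_state /count_kinds /= !kind_degE.
Qed.

Lemma state3_kind v : (state3 v).1.1 = (state1 v).1.1.
Proof.
rewrite /state3 /state2 /step /copy_tgt /copy_src.
by case: (state1 v) => [[k a] b] /=; do 2 case: ifP.
Qed.

Lemma readout_local_gadget :
  readout_ok (msetof [pred w : V | true] state3) -> local_gadget.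
Proof.
case=> no_rejected _ _ v; apply/negPn/negP => not_ok.
have := state3_kind v; rewrite state1E (negbTE not_ok) /=.
have : 0 < msetof [pred w : V | true] state3 (state3 v).
  by apply/card_gt0P; exists v; rewrite inE /= eqxx.
by case: (state3 v) => [[k i] j] pos /= k0; rewrite k0 no_rejected in pos.
Qed.

End NeighbourKinds.

Arguments kind {G} v.
Arguments outdeg {G} v.
Arguments src {G} v.
Arguments tgt {G} v.

Section LocalGadget.
Variable G : graph 3.
Hypotheses (edge_sym : symmetric (@edge 3 G)) (loc : local_gadget G).
Local Notation V := (vert G).
Local Notation edge := (@edge 3 G).
Implicit Types u v w a : V.

Lemma kind_cases v : [\/ kind v = 1, kind v = 2 | kind v = 3].
Proof.
move: (loc v); rewrite /local_ok /kind_degs.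
by case: (kind v) => [|[|[|[|k]]]] //= _; [exact: Or31 | exact: Or32 | exact: Or33].
Qed.

Lemma kind_deg_own v : kind_deg v (kind v) = 0.
Proof.
move: (loc v); rewrite /local_ok /kind_degs.
by case: (kind_cases v) => ->; [case/andP | case/and3P | case/and3P] => *; apply/eqP.
Qed.

Lemma edge_kind_neq v w : edge v w -> kind w != kind v.
Proof.
move=> vw; apply/eqP => same; have /card0_eq/(_ w) := kind_deg_own v.
by rewrite !inE vw same eqxx.
Qed.

Lemma edge_same_kind v w : kind v = kind w -> edge v w = false.
Proof. by move=> same; apply/negP => /edge_kind_neq; rewrite same eqxx. Qed.

Lemma kind_deg_src v : kind v != 1 -> kind_deg v 1 = 1.
Proof.
move: (loc v); rewrite /local_ok /kind_degs.
by case: (kind_cases v) => -> //= /and3P [/eqP].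
Qed.

Lemma kind_deg_partner v : kind v != 1 -> kind_deg v (partner (kind v)) = 1.
Proof.
move: (loc v); rewrite /local_ok /kind_degs.
by case: (kind_cases v) => -> /=; [case/andP | case/and3P | case/and3P] => *; apply/eqP.
Qed.

Lemma src_nb v w : kind v != 1 -> (edge v w && (kind w == 1)) = (w == src v).
Proof. by move/kind_deg_src/kind_nbP. Qed.

Lemma twin_nb v w : kind v != 1 -> (edge v w && (kind w == partner (kind v))) = (w == twin v).
Proof. by move/kind_deg_partner/kind_nbP. Qed.

Lemma edge_src v : kind v != 1 -> edge v (src v) /\ kind (src v) = 1.
Proof. by move=> v_n1; move: (src_nb (src v) v_n1); rewrite eqxx => /andP [-> /eqP]. Qed.

Lemma edge_twin v : kind v != 1 -> edge v (twin v) /\ kind (twin v) = partner (kind v).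
Proof. by move=> v_n1; move: (twin_nb (twin v) v_n1); rewrite eqxx => /andP [-> /eqP]. Qed.

Lemma twinK v : kind v != 1 -> twin (twin v) = v.
Proof.
move=> v_n1; have [v_tw tw_kind] := edge_twin v_n1.
have tw_n1 : kind (twin v) != 1 by rewrite tw_kind /partner; case: ifP.
apply/esym/eqP; rewrite -(twin_nb _ tw_n1) edge_sym v_tw tw_kind /partner.
by case: (kind_cases v) v_n1 => ->.
Qed.

Lemma edge_srcE u v : kind u = 1 -> kind v != 1 -> edge u v = (u == src v).
Proof. by move=> u_kind v_n1; rewrite edge_sym -(src_nb _ v_n1) u_kind eqxx andbT. Qed.

Lemma edge_twinE u v : kind u = 2 -> kind v = 3 -> edge u v = (u == twin v).
Proof.
move=> u_kind v_kind; have v_n1 : kind v != 1 by rewrite v_kind.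
by rewrite -(twin_nb _ v_n1) edge_sym u_kind v_kind /= andbT.
Qed.

Lemma state1_local v : state1 v = (kind v, outdeg v, 0).
Proof. by rewrite state1E loc. Qed.

Lemma state2E v :
  state2 v = if kind v == 1 then (1, outdeg v, 0) else (kind v, outdeg (src v), 0).
Proof.
rewrite /state2 /step /copy_src state1_local /=.
case: eqP => [-> // | /eqP v_n1]; have [v_src src_kind] := edge_src v_n1.
congr (_, _, _); apply: least_idE => [|w j].
  by exists (src v); rewrite ?inE // state1_local src_kind.
rewrite inE state1_local => vw [w_kind <-].
by have /eqP -> : w == src v by rewrite -(src_nb _ v_n1) vw w_kind.
Qed.

Lemma state2_kind v : (state2 v).1.1 = kind v.
Proof. by rewrite state2E; case: eqP. Qed.

Lemma state3E v :
  state3 v = if kind v == 2 then (2, outdeg (src v), outdeg (tgt v)) else state2 v.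
Proof.
rewrite /state3 /step /copy_tgt state2_kind; case: eqP => // v_kind.
have v_n1 : kind v != 1 by rewrite v_kind.
have [v_tw tw_kind] := edge_twin v_n1; rewrite v_kind in tw_kind.
rewrite state2E v_kind /=; congr (_, _, _); apply: least_idE => [|w j].
  by exists (twin v); rewrite ?inE // state2E tw_kind.
rewrite inE => vw w_state; have w_kind : kind w = 3 by rewrite -state2_kind w_state.
have /eqP w_tw : w == twin v by rewrite -(twin_nb _ v_n1) vw v_kind w_kind.
by move: w_state; rewrite state2E w_kind w_tw => -[].
Qed.

Local Notation census F := (msetof [pred w : V | true] F).

Lemma census_rejected i j : census state3 (0, i, j) = 0.
Proof.
apply: eq_card0 => v; rewrite !inE /= state3E state2E.
by case: (kind_cases v) => ->.
Qed.

Lemma census_kind1 i : census state3 (1, i, 0) = #|[pred u : V | (kind u == 1) && (outdeg u == i)]|.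
Proof.
apply: eq_card => v; rewrite !inE /= state3E state2E.
by case: (kind_cases v) => -> //=; rewrite !xpair_eqE andbT.
Qed.

Lemma census_kind2 i j :
  census state3 (2, i, j) =
  #|[pred a : V | (kind a == 2) && ((outdeg (src a), outdeg (tgt a)) == (i, j))]|.
Proof.
apply: eq_card => v; rewrite !inE /= state3E state2E.
by case: (kind_cases v) => -> //=; rewrite !xpair_eqE.
Qed.

Definition gadget_shaped : Prop :=
  [/\ {in [pred u : V | kind u == 1] &, injective outdeg},
      forall a, kind a = 2 -> outdeg (tgt a) < outdeg (src a),
      {in [pred a : V | kind a == 2] &, injective (fun a => (src a, tgt a))} &
      forall u w, kind u = 1 -> kind w = 1 -> outdeg w < outdeg u ->
        exists2 a, kind a = 2 & (src a, tgt a) = (u, w)].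

Lemma kind2_src a : kind a = 2 -> kind (src a) = 1.
Proof. by move=> a_kind; apply: (proj2 (edge_src _)); rewrite a_kind. Qed.

Lemma kind2_tgt a : kind a = 2 -> kind (tgt a) = 1.
Proof.
move=> a_kind; have a_n1 : kind a != 1 by rewrite a_kind.
have [_ tw_kind] := edge_twin a_n1.
by apply: (proj2 (edge_src _)); rewrite tw_kind a_kind.
Qed.

Lemma readout_gadget_shaped : readout_ok (census state3) -> gadget_shaped.
Proof.
case=> _ le1 eq2; rewrite /readout_ok in le1 eq2.
have outdeg_inj : {in [pred u : V | kind u == 1] &, injective outdeg}.
  move=> u w; rewrite !inE => u_kind w_kind same.
  move: (le1 (outdeg u)); rewrite census_kind1 => /card_le1_eqP.
  by apply; rewrite inE ?u_kind ?w_kind ?same eqxx.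
split=> // [a a_kind | a a' a_kind a'_kind same | u w u_kind w_kind lt_wu].
- have : 0 < census state3 (2, outdeg (src a), outdeg (tgt a)).
    by rewrite census_kind2; apply/card_gt0P; exists a; rewrite inE a_kind !eqxx.
  by rewrite eq2 lt0b => /and3P [].
- rewrite !inE in a_kind a'_kind.
  have : census state3 (2, outdeg (src a), outdeg (tgt a)) <= 1 by rewrite eq2 leq_b1.
  rewrite census_kind2 => /card_le1_eqP; apply; rewrite inE ?a_kind ?a'_kind ?eqxx //=.
  by case: same => -> ->.
- have : 0 < census state3 (2, outdeg u, outdeg w).
    rewrite eq2 lt_wu !census_kind1 lt0b; apply/and3P; split => //; apply/card_gt0P.
      by exists u; rewrite inE u_kind !eqxx.
    by exists w; rewrite inE w_kind !eqxx.
  rewrite census_kind2 => /card_gt0P [a]; rewrite inE => /andP [/eqP a_kind].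
  rewrite xpair_eqE => /andP [/eqP src_u /eqP tgt_w]; exists a => //.
  have src_kind := kind2_src a_kind; have tgt_kind := kind2_tgt a_kind.
  have -> : src a = u by apply: outdeg_inj; rewrite ?inE ?src_kind ?u_kind.
  by have -> : tgt a = w by apply: outdeg_inj; rewrite ?inE ?tgt_kind ?w_kind.
Qed.

Lemma gadget_shaped_readout : gadget_shaped -> readout_ok (census state3).
Proof.
case=> outdeg_inj lt_ends ends_inj ends_surj; split=> [|i|i j].
- exact: census_rejected.
- rewrite census_kind1; apply/card_le1_eqP => u w; rewrite !inE.
  by move=> /andP [u_kind /eqP <-] /andP [w_kind /eqP same]; apply: outdeg_inj.
rewrite census_kind2 !census_kind1.
set A := [pred a : V | _].
have A_le1 : #|A| <= 1.
  apply/card_le1_eqP => a a'; rewrite !inE.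
  move=> /andP [/eqP a_kind /eqP [si ti]] /andP [/eqP a'_kind /eqP [si' ti']].
  apply: ends_inj; rewrite ?inE ?a_kind ?a'_kind //.
  by congr pair; apply: outdeg_inj; rewrite ?inE ?(kind2_src a_kind) ?(kind2_src a'_kind)
    ?(kind2_tgt a_kind) ?(kind2_tgt a'_kind) ?si ?si' ?ti ?ti'.
have A_gt0 : (0 < #|A|) =
    [&& j < i, 0 < #|[pred u : V | (kind u == 1) && (outdeg u == i)]|
             & 0 < #|[pred u : V | (kind u == 1) && (outdeg u == j)]|].
  apply/idP/and3P => [/card_gt0P [a] | [lt_ji /card_gt0P [u u_in] /card_gt0P [w w_in]]].
    rewrite inE => /andP [/eqP a_kind /eqP [<- <-]].
    split; first exact: lt_ends.
      by apply/card_gt0P; exists (src a); rewrite inE kind2_src ?eqxx.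
    by apply/card_gt0P; exists (tgt a); rewrite inE kind2_tgt ?eqxx.
  move: u_in w_in; rewrite !inE => /andP [/eqP u_kind /eqP u_i] /andP [/eqP w_kind /eqP w_j].
  rewrite -u_i -w_j in lt_ji.
  have [a a_kind [src_a tgt_a]] := ends_surj u w u_kind w_kind lt_ji.
  by apply/card_gt0P; exists a; rewrite inE a_kind src_a tgt_a u_i w_j !eqxx.
by case: #|A| A_le1 A_gt0 => [|[|]] // _ <-.
Qed.

End LocalGadget.

(** * Accepted graphs are gadgets of linear orders *)

Definition gad_kind (T : finType) (r : gad_raw T) : nat :=
  match r with inl _ => 1 | inr (inl _) => 2 | inr (inr _) => 3 end.

Lemma gad_lab_rawE (T : finType) (r : gad_raw T) : gad_lab_raw r = kind_lab (gad_kind r).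
Proof. by case: r => [?|[?|?]]; apply: val_inj. Qed.

Lemma gad_adj_rawC (T : finType) (r r' : gad_raw T) : gad_adj_raw r r' = gad_adj_raw r' r.
Proof. by case: r => [?|[?|?]]; case: r' => [?|[?|?]] //=; rewrite eq_sym. Qed.

Lemma inj_surj_bij (T T' : finType) (f : T -> T') :
  injective f -> (forall y, exists x, f x = y) -> bijective f.
Proof.
move=> f_inj f_surj; apply: (inj_card_bij f_inj); rewrite -(card_codom f_inj).
by apply/subset_leq_card/subsetP => y _; have [x <-] := f_surj y; exact: codom_f.
Qed.

Section ShapedIsGadget.
Variable G : graph 3.
Hypotheses (edge_sym : symmetric (@edge 3 G)) (loc : local_gadget G) (shaped : gadget_shaped G).
Variable x0 : vert G.
Local Notation V := (vert G).
Local Notation edge := (@edge 3 G).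
Implicit Types u v w a : V.

Definition kind1_vert := {u : V | kind u == 1}.

Definition outdeg_order : graph 0 :=
  @Graph 0 kind1_vert (fun p q : kind1_vert => outdeg (val q) < outdeg (val p)) (fun _ => [tuple]).

Lemma outdeg_order_linear : strict_linear_order outdeg_order.
Proof.
case: shaped => outdeg_inj _ _ _; split=> [p|q p r|p q p_neq_q] /=; first by rewrite ltnn.
  by move=> lt_qp lt_rq; exact: ltn_trans lt_rq lt_qp.
rewrite -neq_ltn; apply: contra p_neq_q => /eqP same; apply/eqP/val_inj.
by apply: outdeg_inj; rewrite ?inE ?(valP p) ?(valP q) // same.
Qed.

(* [x0] only witnesses that [kind1_vert] is inhabited, for the default of [insubd]. *)
Let u0 : V := if kind x0 == 1 then x0 else src x0.

Let u0_kind : kind u0 == 1.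
Proof. by rewrite /u0; case: ifPn => // x0_n1; rewrite (proj2 (edge_src loc x0_n1)). Qed.

Definition to_kind1 v : kind1_vert := insubd (exist _ u0 u0_kind) v.

Lemma to_kind1K v : kind v = 1 -> val (to_kind1 v) = v.
Proof. by move=> v_kind; rewrite val_insubd v_kind eqxx. Qed.

Definition mid_node v := if kind v == 3 then twin v else v.

Definition ends v : kind1_vert * kind1_vert :=
  (to_kind1 (src (mid_node v)), to_kind1 (tgt (mid_node v))).
Arguments ends : simpl never.

Definition to_gad_raw v : gad_raw kind1_vert :=
  if kind v == 1 then inl (to_kind1 v)
  else if kind v == 2 then inr (inl (ends v)) else inr (inr (ends v)).

Lemma kind_mid_node v : kind v != 1 -> kind (mid_node v) = 2.
Proof.
move=> v_n1; rewrite /mid_node; have [_ tw_kind] := edge_twin loc v_n1.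
by case: (kind_cases loc v) v_n1 => v_kind; rewrite v_kind //= tw_kind v_kind.
Qed.

Lemma tgt_mid_node v : kind v = 3 -> tgt (mid_node v) = src v.
Proof. by move=> v_kind; rewrite /mid_node v_kind /tgt twinK // v_kind. Qed.

Lemma kind1_endpoint u : kind u = 1 -> exists2 a, kind a = 2 & (u == src a) || (u == tgt a).
Proof.
move=> u_kind; move: (loc u); rewrite /local_ok /kind_degs u_kind addn_gt0 => /andP [_].
case/orP=> /card_gt0P [w]; rewrite inE => /andP [uw /eqP w_kind];
  have w_n1 : kind w != 1 by rewrite w_kind.
  by exists w; rewrite // -edge_srcE ?uw.
exists (mid_node w); first exact: kind_mid_node.
by rewrite (tgt_mid_node w_kind) -(edge_srcE edge_sym loc u_kind w_n1) uw orbT.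
Qed.

Lemma ends_valid v : kind v != 1 -> @Defs.edge 0 outdeg_order (ends v).1 (ends v).2.
Proof.
move=> v_n1; have a_kind := kind_mid_node v_n1; case: shaped => _ lt_ends _ _.
by rewrite /= !to_kind1K ?lt_ends ?(kind2_src loc a_kind) ?(kind2_tgt loc a_kind).
Qed.

Lemma to_gad_raw_valid v : gad_valid (@Defs.edge 0 outdeg_order) (to_gad_raw v).
Proof.
rewrite /to_gad_raw; case: (kind_cases loc v) => v_kind; rewrite v_kind /=;
  try by apply: ends_valid; rewrite v_kind.
case: shaped => _ lt_ends _ _; have [a a_kind] := kind1_endpoint v_kind.
have [src_kind tgt_kind] := (kind2_src loc a_kind, kind2_tgt loc a_kind).
case/orP=> /eqP ->; apply/existsP.
  by exists (to_kind1 (tgt a)); rewrite /= !to_kind1K ?lt_ends.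
by exists (to_kind1 (src a)); rewrite /= !to_kind1K ?lt_ends ?orbT.
Qed.

Definition to_gad v : vert (gad outdeg_order) := exist _ (to_gad_raw v) (to_gad_raw_valid v).

Lemma to_kind1_eq u v : kind u = 1 -> kind v = 1 -> (to_kind1 u == to_kind1 v) = (u == v).
Proof. by move=> u_kind v_kind; rewrite -val_eqE !to_kind1K. Qed.

Lemma ends_eq u v : kind u != 1 -> kind v != 1 -> (ends u == ends v) = (mid_node u == mid_node v).
Proof.
move=> u_n1 v_n1; have [u_kind v_kind] := (kind_mid_node u_n1, kind_mid_node v_n1).
case: shaped => _ _ ends_inj _; rewrite /ends; apply/eqP/eqP => [[/eqP su /eqP tu] | ->] //.
have [src_u_kind tgt_u_kind] := (kind2_src loc u_kind, kind2_tgt loc u_kind).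
have [src_v_kind tgt_v_kind] := (kind2_src loc v_kind, kind2_tgt loc v_kind).
move: su tu; rewrite !to_kind1_eq // => /eqP su /eqP tu.
by apply: ends_inj; rewrite ?inE ?u_kind ?v_kind //= su tu.
Qed.

Lemma mid_node_inj u v : kind u = kind v -> kind u != 1 -> mid_node u = mid_node v -> u = v.
Proof.
rewrite /mid_node => same u_n1; rewrite -same; case: ifP => // /eqP u_kind tw.
by rewrite -(twinK edge_sym loc u_n1) tw twinK // -same.
Qed.

Lemma to_gad_inj : injective to_gad.
Proof.
move=> u v /(congr1 val); rewrite /= /to_gad_raw.
case: (kind_cases loc u) => u_kind; case: (kind_cases loc v) => v_kind;
  rewrite u_kind v_kind // => /eqP; rewrite -!sum_eqE /= -?sum_eqE /=.
- by rewrite to_kind1_eq // => /eqP.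
- by rewrite ends_eq ?u_kind ?v_kind // => /eqP; apply: mid_node_inj; rewrite ?u_kind.
- by rewrite ends_eq ?u_kind ?v_kind // => /eqP; apply: mid_node_inj; rewrite ?u_kind.
Qed.

Lemma to_kind1_src_eq u w :
  kind u = 1 -> kind w != 1 -> (to_kind1 (src w) == to_kind1 u) = edge u w.
Proof.
move=> u_kind w_n1; have [_ src_kind] := edge_src loc w_n1.
by rewrite to_kind1_eq // edge_srcE // eq_sym.
Qed.

Lemma to_gad_edge u v : gad_adj_raw (to_gad_raw u) (to_gad_raw v) = edge u v.
Proof.
wlog le_uv : u v / kind u <= kind v.
  move=> wlog_le; case: (leqP (kind u) (kind v)) => [|/ltnW]; first exact: wlog_le.
  by rewrite gad_adj_rawC edge_sym; apply: wlog_le.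
rewrite /to_gad_raw; move: le_uv.
case: (kind_cases loc u) => u_kind; case: (kind_cases loc v) => v_kind;
  rewrite u_kind v_kind //= => _; try by rewrite edge_same_kind ?u_kind.
- by rewrite /mid_node v_kind /= to_kind1_src_eq ?v_kind.
- by rewrite tgt_mid_node // to_kind1_src_eq ?v_kind.
by rewrite ends_eq ?u_kind ?v_kind // edge_twinE // /mid_node u_kind v_kind.
Qed.

Lemma to_gad_lab v : gad_lab_raw (to_gad_raw v) = lab v.
Proof.
have v_kind : gad_kind (to_gad_raw v) = kind v.
  by rewrite /to_gad_raw; case: (kind_cases loc v) => ->.
have v_n0 : kind v != 0 by case: (kind_cases loc v) => ->.
by rewrite gad_lab_rawE v_kind; apply: lab_kindK.
Qed.

Lemma to_gad_surj y : exists v, to_gad v = y.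
Proof.
case: shaped => _ _ _ ends_surj.
case: y => -[p|[[p q]|[p q]]] valid.
- by exists (val p); apply: val_inj; rewrite /= /to_gad_raw (eqP (valP p)) /= /to_kind1 valKd.
- have [a a_kind [src_a tgt_a]] := ends_surj _ _ (eqP (valP p)) (eqP (valP q)) valid.
  exists a; apply: val_inj.
  by rewrite /= /to_gad_raw /ends /mid_node a_kind /= src_a tgt_a /to_kind1 !valKd.
have [a a_kind [src_a tgt_a]] := ends_surj _ _ (eqP (valP p)) (eqP (valP q)) valid.
have a_n1 : kind a != 1 by rewrite a_kind.
have [_ tw_kind] := edge_twin loc a_n1; rewrite a_kind in tw_kind.
exists (twin a); apply: val_inj.
by rewrite /= /to_gad_raw /ends /mid_node tw_kind /= twinK // src_a tgt_a /to_kind1 !valKd.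
Qed.

Lemma shaped_gadget_iso : isomorphic G (gad outdeg_order).
Proof.
exists to_gad; split; last exact: to_gad_lab; last exact: to_gad_edge.
exact: inj_surj_bij to_gad_inj to_gad_surj.
Qed.

End ShapedIsGadget.

(** * Gadgets of linear orders are accepted *)

Section GadgetOfOrder.
Variables (d : nat) (G' : graph d).
Hypothesis slo : strict_linear_order G'.
Local Notation V := (vert G').
Local Notation E := (@edge d G').
Local Notation H := (gad G').

Definition out_card (u : V) := #|[pred w | E u w]|.

Lemma out_card_lt u w : E u w -> out_card w < out_card u.
Proof.
case: slo => irr trans _ uw; apply: proper_card; apply/properP; split.
  by apply/subsetP => z; rewrite !inE; apply: trans.
by exists w; rewrite !inE ?irr.
Qed.

Lemma out_card_ltE u w : (out_card w < out_card u) = E u w.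
Proof.
apply/idP/idP => [lt_wu | /out_card_lt //]; case: slo => _ _ total.
have [eq_uw | ne_uw] := eqVneq u w; first by rewrite eq_uw ltnn in lt_wu.
by case/orP: (total u w ne_uw) => // /out_card_lt; rewrite ltnNge ltnW.
Qed.

Lemma out_card_inj : injective out_card.
Proof.
move=> u w same; apply/eqP/negPn/negP => ne_uw; case: slo => _ _ total.
by case/orP: (total u w ne_uw); rewrite -out_card_ltE same ltnn.
Qed.

Lemma kind_gad (y : vert H) : kind y = gad_kind (val y).
Proof. by rewrite /kind /= gad_lab_rawE lab_kind_lab //; case: (val y) => [?|[?|?]]. Qed.

Lemma kind_deg_gad (y : vert H) k :
  kind_deg y k = #|[pred r | [&& gad_valid E r, gad_adj_raw (val y) r & gad_kind r == k]]|.
Proof.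
rewrite /kind_deg -(card_image val_inj); apply: eq_card => r; rewrite inE.
apply/imageP/and3P => [[z] | [r_valid adj r_kind]].
  by rewrite inE kind_gad => /andP [adj r_kind] ->; split=> //; exact: valP.
by exists (Sub r r_valid); rewrite // inE kind_gad /= adj.
Qed.

Lemma valid_src (u w : V) : E u w -> gad_valid E (inl u).
Proof. by move=> uw; apply/existsP; exists w; rewrite uw. Qed.

Lemma valid_tgt (u w : V) : E u w -> gad_valid E (inl w).
Proof. by move=> uw; apply/existsP; exists u; rewrite uw orbT. Qed.

Lemma gad_local : local_gadget H.
Proof.
case=> -[u|[e|e]] y_valid; rewrite /local_ok /kind_degs kind_gad /= !kind_deg_gad /=.
- apply/andP; split.
    by apply/eqP/eq_card0 => -[w|[e'|e']]; rewrite inE /= ?andbF.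
  rewrite addn_gt0; move/existsP: y_valid => [w /orP [uw | wu]]; apply/orP.
    by left; apply/card_gt0P; exists (inr (inl (u, w))); rewrite inE /= uw eqxx.
  by right; apply/card_gt0P; exists (inr (inr (w, u))); rewrite inE /= wu eqxx.
- apply/and3P; split; apply/eqP.
  + apply: (@eq_card1 _ (inl e.1)) => -[w|[e'|e']]; rewrite !inE -?sum_eqE /= ?andbF ?andbT //.
    by apply/andP/eqP => [[_ /eqP <-] | ->] //; split=> //; exact: valid_src y_valid.
  + by apply: eq_card0 => -[w|[e'|e']]; rewrite inE /= ?andbF.
  + apply: (@eq_card1 _ (inr (inr e))) => -[w|[e'|e']];
      rewrite !inE -?sum_eqE /= -?sum_eqE /= ?andbF ?andbT //.
    by apply/andP/eqP => [[_ /eqP <-] | ->].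
- apply/and3P; split; apply/eqP.
  + apply: (@eq_card1 _ (inl e.2)) => -[w|[e'|e']]; rewrite !inE -?sum_eqE /= ?andbF ?andbT //.
    by apply/andP/eqP => [[_ /eqP <-] | ->] //; split=> //; exact: valid_tgt y_valid.
  + apply: (@eq_card1 _ (inr (inl e))) => -[w|[e'|e']];
      rewrite !inE -?sum_eqE /= -?sum_eqE /= ?andbF ?andbT //.
    by apply/andP/eqP => [[_ /eqP <-] | ->].
  + by apply: eq_card0 => -[w|[e'|e']]; rewrite inE /= ?andbF.
Qed.

Lemma outdeg_gad (y : vert H) u : val y = inl u -> outdeg y = out_card u.
Proof.
move=> y_u; rewrite /outdeg kind_deg_gad y_u /out_card.
have out_inj : injective (fun w : V => inr (inl (u, w)) : gad_raw V) by move=> w w' [].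
rewrite -(card_image out_inj); apply: eq_card => r; rewrite inE.
apply/and3P/imageP => [[] | [w]]; last by rewrite inE /= => uw ->; rewrite eqxx.
by case: r => [?|[[a b]|?]] //= ab /eqP a_u _; exists b; rewrite ?inE -?a_u.
Qed.

Lemma val_src_mid (y : vert H) e : val y = inr (inl e) -> val (src y) = inl e.1.
Proof.
move=> y_e; have e_edge : E e.1 e.2 by have := valP y; rewrite y_e.
have y_n1 : kind y != 1 by rewrite kind_gad y_e.
pose z : vert H := Sub (inl e.1) (valid_src e_edge).
have /eqP <- // : z == src y.
by rewrite -(src_nb gad_local) // kind_gad /= y_e /= eqxx.
Qed.

Lemma val_src_end (y : vert H) e : val y = inr (inr e) -> val (src y) = inl e.2.
Proof.
move=> y_e; have e_edge : E e.1 e.2 by have := valP y; rewrite y_e.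
have y_n1 : kind y != 1 by rewrite kind_gad y_e.
pose z : vert H := Sub (inl e.2) (valid_tgt e_edge).
have /eqP <- // : z == src y.
by rewrite -(src_nb gad_local) // kind_gad /= y_e /= eqxx.
Qed.

Lemma val_tgt_mid (y : vert H) e : val y = inr (inl e) -> val (tgt y) = inl e.2.
Proof.
move=> y_e; have e_edge : E e.1 e.2 by have := valP y; rewrite y_e.
have y_n1 : kind y != 1 by rewrite kind_gad y_e.
pose z : vert H := Sub (inr (inr e)) e_edge.
have /eqP tw : z == twin y.
  by rewrite -(twin_nb gad_local) // !kind_gad /= y_e /= eqxx.
by rewrite /tgt -tw (@val_src_end z e erefl).
Qed.

Lemma gad_shaped : gadget_shaped H.
Proof.
split=> [y z | a | a a' | y z].
- rewrite !inE !kind_gad; case Ey: (val y) => [u|[?|?]] //; case Ez: (val z) => [w|[?|?]] // _ _.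
  by rewrite (outdeg_gad Ey) (outdeg_gad Ez) => /out_card_inj uw; apply: val_inj; rewrite Ey Ez uw.
- rewrite kind_gad; case Ea: (val a) => [?|[e|?]] // _.
  rewrite (outdeg_gad (val_tgt_mid Ea)) (outdeg_gad (val_src_mid Ea)); apply: out_card_lt.
  by have := valP a; rewrite Ea.
- rewrite !inE !kind_gad; case Ea: (val a) => [?|[e|?]] //; case Ea': (val a') => [?|[e'|?]] // _ _.
  case=> /(congr1 val) + /(congr1 val).
  rewrite (val_src_mid Ea) (val_src_mid Ea') (val_tgt_mid Ea) (val_tgt_mid Ea') => -[s] [t].
  by apply: val_inj; rewrite Ea Ea'; case: e e' s t {Ea Ea'} => [? ?] [? ?] /= -> ->.
rewrite !kind_gad; case Ey: (val y) => [u|[?|?]] //; case Ez: (val z) => [w|[?|?]] // _ _.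
rewrite (outdeg_gad Ey) (outdeg_gad Ez) out_card_ltE => uw.
pose a : vert H := Sub (inr (inl (u, w))) uw.
exists a; first by rewrite kind_gad.
congr pair; apply: val_inj.
  exact: etrans (@val_src_mid a (u, w) erefl) (esym Ey).
exact: etrans (@val_tgt_mid a (u, w) erefl) (esym Ez).
Qed.

End GadgetOfOrder.

Theorem theorem5 :
  exists C : acr_classifier 3,
    forall (G : graph 3), undirected G ->
      forall x : vert G, accepts C x <-> phi_GadLin x.
Proof.
exists gadlin_classifier => G [_ edge_sym] x; split.
- rewrite accepts_gadlin => /asboolP readout.
  have loc := readout_local_gadget readout.
  have shaped := readout_gadget_shaped loc readout.
  exists 0, (outdeg_order G); split; first exact: outdeg_order_linear.
  exact: shaped_gadget_iso edge_sym loc shaped x.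
case=> d' [G' [slo [f [f_bij f_edge f_lab]]]].
rewrite (accepts_iso _ f_bij f_edge f_lab) accepts_gadlin; apply/asboolP.
exact: gadget_shaped_readout (@gad_local _ G') (gad_shaped slo).
Qed.
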